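(* Let $\mathcal{H} = \mathcal{H}_{1}\otimes\cdots\otimes\mathcal{H}_{n}$ be a tensor product of finite-dimensional complex Hilbert spaces, let $\ket{\psi}\in\mathcal{H}$ be a unit vector and $\rho=\ket{\psi}\bra{\psi}$. Then for each $k = 1,\dots,n-1$, $$\dim\big(\Omega^k(\rho)\big) = \dim\big(\Omega^{n-k}(\rho)\big).$$
   Context: For $I\subseteq\{1,\dots,n\}$, let $\mathcal{H}_I=\bigotimes_{i\in I}\mathcal{H}_i$ (factors in increasing order), $\rho_I = \mathrm{tr}_{I^C}(\rho)$ the reduced density matrix (partial trace over the complementary factors), and $s_I$ the orthogonal projection of $\mathcal{H}_I$ onto $\mathrm{im}(\rho_I)$ (the support projection). For a linear operator $\mathcal{O}$ on $\mathcal{H}_I$ its restriction is $\mathcal{O}|_{\rho_I} = s_I\mathcal{O}s_I$. For $1\le k\le n$, the space of entanglement $k$-forms is the complex vector space $$\Omega^k(\rho) = \prod_{I\subseteq\{1,\dots,n\},\ |I|=k}\{\, s_I\mathcal{O}s_I \;:\; \mathcal{O}\text{ a linear operator on }\mathcal{H}_I\},$$ i.e. tuples (indexed by the $k$-element subsets, lexicographically ordered) of restricted operators. *)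

From HB Require Import structures.
From mathcomp Require Import all_boot all_order all_algebra.
Set Implicit Arguments. Unset Strict Implicit. Unset Printing Implicit Defensive.
Import Order.TTheory GRing.Theory Num.Theory.
Local Open Scope ring_scope.

Section Entanglement.
Variables (C : numClosedFieldType) (n : nat) (d : 'I_n -> nat).

(* Basis index of H = H_1 (x) ... (x) H_n : multi-indices (x_1,...,x_n),
   x_i < d i.  A vector of H is a function on these. *)
Definition basis_full := {dffun forall i : 'I_n, 'I_(d i)}.

(* Basis index of H_I : multi-indices over the factors in I. *)
Definition basis_sub (I : {set 'I_n}) :=
  {dffun forall j : {i : 'I_n | i \in I}, 'I_(d (val j))}.

Definition restr (I : {set 'I_n}) (x : basis_full) : basis_sub I :=
  [ffun j : {i : 'I_n | i \in I} => x (val j)].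

Definition pure_state (psi : basis_full -> C) (x y : basis_full) : C :=
  psi x * (psi y)^*.

(* partial trace over the complement of I:
   (tr_{I^C} A)(a,b) = sum_c A(a (+) c, b (+) c), where a (+) c is the unique
   full index restricting to a on I and to c on I^C *)
Definition ptrace (I : {set 'I_n}) (A : basis_full -> basis_full -> C)
    (a b : basis_sub I) : C :=
  \sum_(c : basis_sub (~: I))
    \sum_(x : basis_full | (restr I x == a) && (restr (~: I) x == c))
      \sum_(y : basis_full | (restr I y == b) && (restr (~: I) y == c)) A x y.

Definition dimI (I : {set 'I_n}) := #|basis_sub I|.

Definition reduced (psi : basis_full -> C) (I : {set 'I_n}) : 'M[C]_(dimI I) :=
  \matrix_(i, j) ptrace (pure_state psi) (enum_val i) (enum_val j).

(* s is the orthogonal projection (self-adjoint idempotent, acting on column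
   vectors) onto the image (column space) of the matrix M *)
Definition is_support_proj m (M s : 'M[C]_m) : Prop :=
  [/\ s *m s = s, map_mx Num.conj s ^T = s & (s^T == M^T)%MS].

Definition restricted_ops m (s : 'M[C]_m) : {vspace 'M[C]_m} :=
  limg (linfun (fun O : 'M[C]_m => s *m O *m s)).

(* dim Omega^k(rho): Omega^k is the product over |I| = k of the spaces
   { s_I O s_I }, so its dimension is the sum of their dimensions *)
Definition dim_Omega (s : forall I : {set 'I_n}, 'M[C]_(dimI I)) (k : nat) : nat :=
  \sum_(I : {set 'I_n} | #|I| == k) \dim (restricted_ops (s I)).

End Entanglement.

(** The dimension of [{s O s}] is [(rank s)^2] for any idempotent [s], and
    [rank s_I = rank rho_I].  Writing [psi] as a [dim H_I x dim H_(I^C)]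
    coefficient matrix [M_I], one has [rho_I = M_I M_I^*], so
    [rank rho_I = rank M_I]; since [M_(I^C)] is the transpose of [M_I], the
    ranks of [rho_I] and [rho_(I^C)] agree.  Complementation [I |-> I^C] is a
    bijection between the [k]-subsets and the [(n-k)]-subsets, and it preserves
    the summands of [dim Omega]. *)

From HB Require Import structures.
From mathcomp Require Import all_boot all_order all_algebra.
From mathcomp Require Import zify.
Set Implicit Arguments. Unset Strict Implicit. Unset Printing Implicit Defensive.
Import Order.TTheory GRing.Theory Num.Theory.
Local Open Scope ring_scope.
Local Open Scope sesquilinear_scope.

Lemma row_base_col_base_idem (F : fieldType) m (s : 'M[F]_m) :
  s *m s = s -> row_base s *m col_base s = 1%:M.
Proof.
move=> ss; apply: (row_free_inj (row_base_free s)); rewrite mul1mx.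
apply: (row_full_inj (col_base_full s)).
by rewrite mulmxA (mulmxA (col_base s)) mulmx_base -mulmxA mulmx_base ss.
Qed.

Section RestrictedOperators.
Variables (C : numClosedFieldType) (m r : nat).
Variables (A : 'M[C]_(r, m)) (B : 'M[C]_(m, r)).
Hypothesis AB1 : A *m B = 1%:M.

(* [O |-> B A O B A] factors as [X |-> B X A] after the surjection
   [O |-> A O B], and the former is injective. *)
Lemma dim_restricted_ops_factor :
  \dim (restricted_ops (B *m A)) = (r * r)%N.
Proof.
pose compress := linfun (mulmxr B \o mulmx A).
pose expand := linfun (mulmxr A \o mulmx B).
have compressK X : compress (expand X) = X.
  by rewrite !lfunE /= !mulmxA AB1 mul1mx -mulmxA AB1 mulmx1.
have -> : restricted_ops (B *m A) = limg (expand \o compress)%VF.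
  congr (_ @: _)%VS; apply/lfunP => O.
  rewrite -[linfun _ O]/(linfun (mulmxr (B *m A) \o mulmx (B *m A)) O).
  by rewrite comp_lfunE !lfunE /= !mulmxA.
have compress_onto : limg compress = fullv.
  apply/eqP; rewrite eqEsubv subvf; apply/subvP => X _.
  by rewrite -(compressK X) memv_img ?memvf.
rewrite limg_comp compress_onto limg_dim_eq ?dimvf ?dim_matrix //.
apply/eqP; rewrite capfv -subv0; apply/subvP => X /[!memv_ker] /eqP expandX0.
by rewrite memv0 -(compressK X) expandX0 linear0.
Qed.

End RestrictedOperators.

Lemma dim_restricted_ops_idem (C : numClosedFieldType) m (s : 'M[C]_m) :
  s *m s = s -> \dim (restricted_ops s) = (\rank s ^ 2)%N.
Proof.
move=> ss; rewrite -{1}(mulmx_base s).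
exact/dim_restricted_ops_factor/row_base_col_base_idem.
Qed.

(* Only idempotence and the range of [s] matter, not self-adjointness. *)
Lemma dim_restricted_ops_support (C : numClosedFieldType) m (M s : 'M[C]_m) :
  is_support_proj M s -> \dim (restricted_ops s) = (\rank M ^ 2)%N.
Proof.
case=> ss _ eq_range; rewrite dim_restricted_ops_idem //.
by rewrite -mxrank_tr (eqmx_rank eq_range) mxrank_tr.
Qed.

Lemma trmxC_mul (C : numClosedFieldType) m n p
    (A : 'M[C]_(m, n)) (B : 'M[C]_(n, p)) :
  (A *m B)^t* = B^t* *m A^t*.
Proof. by rewrite trmx_mul map_mxM. Qed.

Lemma mulmx_trmxC_eq0 (C : numClosedFieldType) n (v : 'rV[C]_n) :
  v *m v^t* = 0 -> v = 0.
Proof.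
move=> vv0; apply/eqP; rewrite -(dnorm_eq0 (@dotmx C n)).
by apply/eqP; apply: etrans (dotmxE v v) _; rewrite vv0 mxE.
Qed.

Lemma mxrank_mul_trmxC (C : numClosedFieldType) m n (A : 'M[C]_(m, n)) :
  \rank (A *m A^t*) = \rank A.
Proof.
rewrite -[RHS](mxrank_mul_ker A (A^t*)).
suff -> : (A :&: kermx (A^t*))%MS = 0 by rewrite mxrank0 addn0.
apply/eqP/rowV0P => v /[!sub_capmx] /andP[/submxP[w ->] /sub_kermxP wAA0].
by apply: mulmx_trmxC_eq0; rewrite trmxC_mul mulmxA wAA0 mul0mx.
Qed.

Section CoefficientMatrix.
Variables (C : numClosedFieldType) (n : nat) (d : 'I_n -> nat).
Variable psi : basis_full d -> C.

Definition coef_mx (I J : {set 'I_n}) : 'M[C]_(dimI d I, dimI d J) :=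
  \matrix_(a, b) \sum_(x | (restr I x == enum_val a) && (restr J x == enum_val b))
                   psi x.

Lemma tr_coef_mx I J : (coef_mx I J)^T = coef_mx J I.
Proof. by apply/matrixP => a b; rewrite !mxE; apply: eq_bigl => x; rewrite andbC. Qed.

Lemma reduced_coef_mx I :
  reduced psi I = coef_mx I (~: I) *m (coef_mx I (~: I))^t*.
Proof.
apply/matrixP => a b; rewrite !mxE /ptrace big_enum_val.
apply: eq_bigr => c _; rewrite !mxE rmorph_sum mulr_suml.
by apply: eq_bigr => x _; rewrite mulr_sumr.
Qed.

Lemma mxrank_reduced_setC I : \rank (reduced psi (~: I)) = \rank (reduced psi I).
Proof.
by rewrite !reduced_coef_mx !mxrank_mul_trmxC setCK -tr_coef_mx mxrank_tr.
Qed.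

End CoefficientMatrix.

Theorem corollary1 (C : numClosedFieldType) (n : nat) (d : 'I_n -> nat)
    (psi : basis_full d -> C)
    (hunit : \sum_(x : basis_full d) `|psi x| ^+ 2 = 1)
    (s : forall I : {set 'I_n}, 'M[C]_(dimI d I))
    (hs : forall I : {set 'I_n}, is_support_proj (reduced psi I) (s I))
    (k : nat) (hk1 : (1 <= k)%N) (hk2 : (k <= n - 1)%N) :
  dim_Omega s k = dim_Omega s (n - k).
Proof.
have dim_setC I : \dim (restricted_ops (s (~: I))) = \dim (restricted_ops (s I)).
  by rewrite !(dim_restricted_ops_support (hs _)) mxrank_reduced_setC.
rewrite /dim_Omega [RHS](reindex_inj (@setC_inj _)) /=.
apply: eq_big => [I | I _]; last by rewrite dim_setC.
have := cardsC I; rewrite card_ord.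
by move: #|I| #|~: I| => a b card_split; apply/eqP/eqP; lia.
Qed.
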